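(* Let $(B,D,d,\theta)$ be a regular E-system, $\mathcal A=\mathcal A_{B\to D}$ its associated Ann-category, $Q$ a ring and $\psi:Q\to\operatorname{Coker}d$ a ring homomorphism. Then assigning to an Ann-functor $F:\mathrm{Dis}\,Q\to\mathcal A$ (inducing $\psi$ on $\pi_0$) its associated extension $\mathcal E_F$ (the crossed-product extension $0\to B\to E_0\to Q\to0$, $E_0=B\times Q$ with $(b,u)+(b',u')=(b+b'+f(u,u'),u+u')$, $(b,u)(b',u')=(bb'+b\theta_{F u'}+\theta_{Fu}b'+g(u,u'),uu')$, $f(u,v)=\breve F_{u,v}$, $g(u,v)=\widetilde F_{u,v}$, and $\varepsilon(b,u)=d(b)+F(u)$) induces a bijection $$\Omega:\mathrm{Hom}^{Ann}_{(\psi,0)}[\mathrm{Dis}\,Q,\mathcal A]\to\mathrm{Ext}_{B\to D}(Q,B,\psi).$$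
   Context: E-system $(B,D,d,\theta)$: $B$ a ring, $D$ a unital ring, $d:B\to D$, $\theta:D\to M_B$ ring homomorphisms into the ring of bimultiplications of $B$ with $\theta(d(b))=\mu_b$ (inner bimultiplication $c\mapsto bc$, $c\mapsto cb$), $d(\theta_xb)=x\,d(b)$, $d(b\theta_x)=d(b)x$; regular if $\theta(1)=1$ and any two $\sigma,\tau\in\theta(D)$ are permutable ($\sigma(a\tau)=(\sigma a)\tau$, $\tau(a\sigma)=(\tau a)\sigma$). Morphism of E-systems $(f_1,f_0)$: ring homomorphisms with $f_0d=d'f_1$, $f_1(\theta_xb)=\theta'_{f_0(x)}f_1(b)$, $f_1(b\theta_x)=f_1(b)\theta'_{f_0(x)}$. Associated Ann-category $\mathcal A_{B\to D}$: objects elements of $D$, morphisms $x\to y$ the $b\in B$ with $y=d(b)+x$, composition by addition, $\oplus,\otimes$ given by $+,\cdot$ on objects and by $b+b'$, $bb'+b\theta_{x'}+\theta_xb'$ on morphisms $x\xrightarrow{b}y$, $x'\xrightarrow{b'}y'$; all constraints identities. Here $\pi_0\mathcal A=\operatorname{Coker}d$, $\pi_1\mathcal A=\operatorname{Aut}(0)=\operatorname{Ker}d$. $\mathrm{Dis}\,Q$: strict Ann-category with objects elements of $Q$ and only identity morphisms. An Ann-functor is a functor with natural isomorphisms $\breve F:F(X\oplus Y)\to FX\oplus FY$, $\widetilde F:F(X\otimes Y)\to FX\otimes FY$ making it symmetric monoidal for $\oplus$, monoidal for $\otimes$, compatible with distributivity; a homotopy is a natural transformation compatible with both structures. $\mathrm{Hom}^{Ann}_{(\psi,0)}[\mathrm{Dis}\,Q,\mathcal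 A]$ is the set of homotopy classes of Ann-functors $F:\mathrm{Dis}\,Q\to\mathcal A$ whose induced map on $\pi_0$ is $\psi$ (i.e. $F(u)\in\psi(u)$). A ring extension of $B$ by $Q$ of type $B\to D$: an exact sequence of ring homomorphisms $0\to B\xrightarrow{j}E\xrightarrow{p}Q\to0$ and a ring homomorphism $\varepsilon:E\to D$ such that $(B,E,j,\theta')$ with $\theta'$ of bimultiplication type ($\theta'_eb=eb$, $b\theta'_e=be$) is an E-system and $(\mathrm{id}_B,\varepsilon)$ is a morphism of E-systems; it induces $\psi:Q\to\operatorname{Coker}d$ with $\psi p=q\varepsilon$. Two such extensions $(E,j,p,\varepsilon)$, $(E',j',p',\varepsilon')$ are equivalent if there is a ring homomorphism $\eta:E\to E'$ with $\eta j=j'$, $p'\eta=p$, $\varepsilon'\eta=\varepsilon$. $\mathrm{Ext}_{B\to D}(Q,B,\psi)$ is the set of equivalence classes of extensions of $B$ by $Q$ of type $B\to D$ inducing $\psi$. *)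

(* MathComp rings are unital and carry decidable equality /
   choice; here B is a NON-unital ring and extensions E range over arbitrary
   rings, so rings are given concretely as carriers with operations plus the
   ring axioms as propositions. *)
From Stdlib Require Import ClassicalEpsilon.

Record rng := Rng {
  rcar :> Type;
  rzero : rcar;
  radd : rcar -> rcar -> rcar;
  ropp : rcar -> rcar;
  rmul : rcar -> rcar -> rcar }.

Record ring := Ring { rbase :> rng; rone : rbase }.

Definition is_rng (R : rng) : Prop :=
  (forall x y z, radd R x (radd R y z) = radd R (radd R x y) z) /\
  (forall x y, radd R x y = radd R y x) /\
  (forall x, radd R (rzero R) x = x) /\
  (forall x, radd R (ropp R x) x = rzero R) /\
  (forall x y z, rmul R x (rmul R y z) = rmul R (rmul R x y) z) /\
  (forall x y z, rmul R x (radd R y z) = radd R (rmul R x y) (rmul R x z)) /\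
  (forall x y z, rmul R (radd R x y) z = radd R (rmul R x z) (rmul R y z)).

Definition is_ring (R : ring) : Prop :=
  is_rng R /\ (forall x, rmul R (rone R) x = x) /\ (forall x, rmul R x (rone R) = x).

Definition rng_hom (R S : rng) (h : R -> S) : Prop :=
  (forall x y, h (radd R x y) = radd S (h x) (h y)) /\
  (forall x y, h (rmul R x y) = rmul S (h x) (h y)).

Definition ring_hom (R S : ring) (h : R -> S) : Prop :=
  rng_hom R S h /\ h (rone R) = rone S.

(* s = (bl s, br s):  bl s b = "sigma b",  br s b = "b sigma" *)
Record bimul (B : Type) := Bimul { bl : B -> B; br : B -> B }.
Arguments Bimul {B}. Arguments bl {B}. Arguments br {B}.

Definition is_bimul (B : rng) (s : bimul B) : Prop :=
  forall a b,
    bl s (radd B a b) = radd B (bl s a) (bl s b) /\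
    br s (radd B a b) = radd B (br s a) (br s b) /\
    bl s (rmul B a b) = rmul B (bl s a) b /\
    br s (rmul B a b) = rmul B a (br s b) /\
    rmul B a (bl s b) = rmul B (br s a) b.

(* th : D -> M_B is a ring homomorphism into the ring of bimultiplications
   (sum pointwise; (s t) a = s (t a), a (s t) = (a s) t) *)
Definition bimul_hom (B : rng) (D : ring) (th : D -> bimul B) : Prop :=
  (forall x, is_bimul B (th x)) /\
  (forall x y b,
     bl (th (radd D x y)) b = radd B (bl (th x) b) (bl (th y) b) /\
     br (th (radd D x y)) b = radd B (br (th x) b) (br (th y) b) /\
     bl (th (rmul D x y)) b = bl (th x) (bl (th y) b) /\
     br (th (rmul D x y)) b = br (th y) (br (th x) b)).

Definition Esystem (B : rng) (D : ring) (d : B -> D) (th : D -> bimul B) : Prop :=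
  rng_hom B D d /\ bimul_hom B D th /\
  (forall b c, bl (th (d b)) c = rmul B b c /\ br (th (d b)) c = rmul B c b) /\
  (forall x b, d (bl (th x) b) = rmul D x (d b) /\ d (br (th x) b) = rmul D (d b) x).

Definition regular_Esystem (B : rng) (D : ring) (d : B -> D) (th : D -> bimul B) : Prop :=
  Esystem B D d th /\
  (forall b, bl (th (rone D)) b = b /\ br (th (rone D)) b = b) /\
  (forall x y b, bl (th x) (br (th y) b) = br (th y) (bl (th x) b) /\
                 bl (th y) (br (th x) b) = br (th x) (bl (th y) b)).

Definition Esystem_morphism (B : rng) (D : ring) (d : B -> D) (th : D -> bimul B)
  (B' : rng) (D' : ring) (d' : B' -> D') (th' : D' -> bimul B')
  (f1 : B -> B') (f0 : D -> D') : Prop :=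
  rng_hom B B' f1 /\ ring_hom D D' f0 /\
  (forall b, f0 (d b) = d' (f1 b)) /\
  (forall x b, f1 (bl (th x) b) = bl (th' (f0 x)) (f1 b) /\
               f1 (br (th x) b) = br (th' (f0 x)) (f1 b)).

(* (C, q) presents Coker d = D / d(B) *)
Definition is_coker (B : rng) (D : ring) (d : B -> D) (C : ring) (q : D -> C) : Prop :=
  ring_hom D C q /\ (forall c, exists x, q x = c) /\
  (forall x, q x = rzero C <-> exists b, x = d b).

Definition A_mor (B : rng) (D : ring) (d : B -> D) (x y : D) (b : B) : Prop :=
  y = radd D (d b) x.
Definition A_id (B : rng) : B := rzero B.
Definition A_comp (B : rng) (b c : B) : B := radd B b c.   (* b then c *)
Definition A_inv (B : rng) (b : B) : B := ropp B b.
Definition A_sum (B : rng) (b b' : B) : B := radd B b b'.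
Definition A_tensor (B : rng) (D : ring) (th : D -> bimul B) (x x' : D) (b b' : B) : B :=
  radd B (radd B (rmul B b b') (br (th x') b)) (bl (th x) b').

(* Ann-functor (F, F-breve = f, F-tilde = g) : Dis Q -> A_{B->D}, written out
   (Dis Q and A_{B->D} have identity constraints). *)
Definition ann_functor (B : rng) (D : ring) (d : B -> D) (th : D -> bimul B) (Q : ring)
  (F : Q -> D) (f g : Q -> Q -> B) : Prop :=
  (forall u v, A_mor B D d (F (radd Q u v)) (radd D (F u) (F v)) (f u v)) /\
  (forall u v, A_mor B D d (F (rmul Q u v)) (rmul D (F u) (F v)) (g u v)) /\
  (forall u v w,
     A_comp B (f (radd Q u v) w) (A_sum B (f u v) (A_id B)) =
     A_comp B (f u (radd Q v w)) (A_sum B (A_id B) (f v w))) /\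
  (forall u v, f v u = f u v) /\
  (exists b0, A_mor B D d (rzero D) (F (rzero Q)) b0 /\
     forall u, A_comp B (f (rzero Q) u) (A_sum B (A_inv B b0) (A_id B)) = A_id B /\
               A_comp B (f u (rzero Q)) (A_sum B (A_id B) (A_inv B b0)) = A_id B) /\
  (forall u v w,
     A_comp B (g (rmul Q u v) w)
              (A_tensor B D th (F (rmul Q u v)) (F w) (g u v) (A_id B)) =
     A_comp B (g u (rmul Q v w))
              (A_tensor B D th (F u) (F (rmul Q v w)) (A_id B) (g v w))) /\
  (exists c0, A_mor B D d (rone D) (F (rone Q)) c0 /\
     forall u,
       A_comp B (g (rone Q) u) (A_tensor B D th (F (rone Q)) (F u) (A_inv B c0) (A_id B)) = A_id B /\
       A_comp B (g u (rone Q)) (A_tensor B D th (F u) (F (rone Q)) (A_id B) (A_inv B c0)) = A_id B) /\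
  (forall u v w,
     A_comp B (g u (radd Q v w)) (A_tensor B D th (F u) (F (radd Q v w)) (A_id B) (f v w)) =
     A_comp B (f (rmul Q u v) (rmul Q u w)) (A_sum B (g u v) (g u w))) /\
  (forall u v w,
     A_comp B (g (radd Q u v) w) (A_tensor B D th (F (radd Q u v)) (F w) (f u v) (A_id B)) =
     A_comp B (f (rmul Q u w) (rmul Q v w)) (A_sum B (g u w) (g v w))).

Definition induces_psi (Q : ring) (D C : ring) (q : D -> C) (psi : Q -> C) (F : Q -> D) : Prop :=
  forall u, q (F u) = psi u.

Definition ann_homotopic (B : rng) (D : ring) (d : B -> D) (th : D -> bimul B) (Q : ring)
  (F : Q -> D) (f g : Q -> Q -> B) (F' : Q -> D) (f' g' : Q -> Q -> B) : Prop :=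
  exists a : Q -> B,
    (forall u, A_mor B D d (F u) (F' u) (a u)) /\
    (forall u v, A_comp B (a (radd Q u v)) (f' u v) = A_comp B (f u v) (A_sum B (a u) (a v))) /\
    (forall u v, A_comp B (a (rmul Q u v)) (g' u v) =
                 A_comp B (g u v) (A_tensor B D th (F u) (F v) (a u) (a v))).

Definition is_extension (B : rng) (D : ring) (d : B -> D) (th : D -> bimul B) (Q : ring)
  (E : ring) (j : B -> E) (p : E -> Q) (eps : E -> D) : Prop :=
  is_ring E /\
  rng_hom B E j /\ ring_hom E Q p /\
  (forall b b', j b = j b' -> b = b') /\
  (forall u, exists e, p e = u) /\
  (forall e, p e = rzero Q <-> exists b, e = j b) /\
  ring_hom E D eps /\
  exists th' : E -> bimul B,
    (forall e b, j (bl (th' e) b) = rmul E e (j b) /\ j (br (th' e) b) = rmul E (j b) e) /\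
    Esystem B E j th' /\
    Esystem_morphism B E j th' B D d th (fun b => b) eps.

Definition ext_induces_psi (Q : ring) (D C : ring) (q : D -> C) (psi : Q -> C)
  (E : ring) (p : E -> Q) (eps : E -> D) : Prop :=
  forall e, psi (p e) = q (eps e).

Definition ext_equiv (B : rng) (D Q : ring)
  (E : ring) (j : B -> E) (p : E -> Q) (eps : E -> D)
  (E' : ring) (j' : B -> E') (p' : E' -> Q) (eps' : E' -> D) : Prop :=
  exists eta : E -> E',
    ring_hom E E' eta /\ (forall b, eta (j b) = j' b) /\
    (forall e, p' (eta e) = p e) /\ (forall e, eps' (eta e) = eps e).

Definition EF_add (B : rng) (D : ring) (th : D -> bimul B) (Q : ring)
  (F : Q -> D) (f g : Q -> Q -> B) (x y : rcar B * rcar Q) : rcar B * rcar Q :=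
  let (b, u) := x in let (b', u') := y in
  (radd B (radd B b b') (f u u'), radd Q u u').

Definition EF_mul (B : rng) (D : ring) (th : D -> bimul B) (Q : ring)
  (F : Q -> D) (f g : Q -> Q -> B) (x y : rcar B * rcar Q) : rcar B * rcar Q :=
  let (b, u) := x in let (b', u') := y in
  (radd B (radd B (radd B (rmul B b b') (br (th (F u')) b)) (bl (th (F u)) b')) (g u u'),
   rmul Q u u').

Definition EF_inh (B : rng) (Q : ring) : inhabited (rcar B * rcar Q) :=
  inhabits (rzero B, rzero Q).

(* zero, negatives and unit of E_0 are those determined by + and . *)
Definition EF_zero (B : rng) (D : ring) (th : D -> bimul B) (Q : ring)
  (F : Q -> D) (f g : Q -> Q -> B) : rcar B * rcar Q :=
  epsilon (EF_inh B Q) (fun z => forall x, EF_add B D th Q F f g z x = x).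
Definition EF_opp (B : rng) (D : ring) (th : D -> bimul B) (Q : ring)
  (F : Q -> D) (f g : Q -> Q -> B) (x : rcar B * rcar Q) : rcar B * rcar Q :=
  epsilon (EF_inh B Q) (fun y => EF_add B D th Q F f g y x = EF_zero B D th Q F f g).
Definition EF_one (B : rng) (D : ring) (th : D -> bimul B) (Q : ring)
  (F : Q -> D) (f g : Q -> Q -> B) : rcar B * rcar Q :=
  epsilon (EF_inh B Q)
    (fun e => forall x, EF_mul B D th Q F f g e x = x /\ EF_mul B D th Q F f g x e = x).

Definition EF (B : rng) (D : ring) (th : D -> bimul B) (Q : ring)
  (F : Q -> D) (f g : Q -> Q -> B) : ring :=
  Ring (Rng (rcar B * rcar Q) (EF_zero B D th Q F f g) (EF_add B D th Q F f g)
            (EF_opp B D th Q F f g) (EF_mul B D th Q F f g))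
       (EF_one B D th Q F f g).

(* B -> E_0 : b |-> (b - F-breve_{0,0}, 0)  (this is b |-> (b,0) for
   normalized F);  E_0 -> Q : (b,u) |-> u;  eps : (b,u) |-> d(b) + F(u) *)
Definition EF_j (B : rng) (D : ring) (th : D -> bimul B) (Q : ring)
  (F : Q -> D) (f g : Q -> Q -> B) (b : B) : EF B D th Q F f g :=
  (radd B b (ropp B (f (rzero Q) (rzero Q))), rzero Q).
Definition EF_p (B : rng) (D : ring) (th : D -> bimul B) (Q : ring)
  (F : Q -> D) (f g : Q -> Q -> B) (x : EF B D th Q F f g) : Q := snd x.
Definition EF_eps (B : rng) (D : ring) (d : B -> D) (th : D -> bimul B) (Q : ring)
  (F : Q -> D) (f g : Q -> Q -> B) (x : EF B D th Q F f g) : D :=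
  radd D (d (fst x)) (F (snd x)).

(* Every axiom of an Ann-functor (F, f = F-breve, g = F-tilde) into A_{B->D}
   is an identity in the additive group of B (or of D), and so are the ring
   axioms of the crossed product E_F and the compatibilities of a homotopy. *)
From Stdlib Require Import List Arith ClassicalEpsilon.
Import ListNotations.

Section RngFacts.
Variable R : rng.
Hypothesis HR : is_rng R.
Local Notation "x + y" := (radd R x y).
Local Notation "- x" := (ropp R x).
Local Notation "0" := (rzero R).
Local Notation "x * y" := (rmul R x y).

Lemma addA x y z : x + (y + z) = (x + y) + z.
Proof. apply HR. Qed.
Lemma addC x y : x + y = y + x.
Proof. apply HR. Qed.
Lemma add0l x : 0 + x = x.
Proof. apply HR. Qed.
Lemma addNl x : - x + x = 0.
Proof. apply HR. Qed.
Lemma add0r x : x + 0 = x.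
Proof. rewrite addC; apply add0l. Qed.
Lemma addNr x : x + - x = 0.
Proof. rewrite addC; apply addNl. Qed.
Lemma mulA x y z : x * (y * z) = (x * y) * z.
Proof. apply HR. Qed.
Lemma mulDr x y z : x * (y + z) = x * y + x * z.
Proof. apply HR. Qed.
Lemma mulDl x y z : (x + y) * z = x * z + y * z.
Proof. apply HR. Qed.

Lemma addIr x y z : x + y = x + z -> y = z.
Proof.
  intro H. rewrite <- (add0l y), <- (add0l z), <- (addNl x), <- !addA, H.
  reflexivity.
Qed.
Lemma opp_unique x y : x + y = 0 -> y = - x.
Proof. intro H. apply (addIr x). rewrite H, addNr. reflexivity. Qed.
Lemma eq_of_sub_eq0 x y : x + - y = 0 -> x = y.
Proof. intro H. apply (addIr (- y)). rewrite addNl, addC. exact H. Qed.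
Lemma opp0 : - 0 = 0.
Proof. symmetry. apply opp_unique. apply add0l. Qed.
Lemma oppK x : - - x = x.
Proof. symmetry. apply opp_unique. apply addNl. Qed.
Lemma oppD x y : - (x + y) = - x + - y.
Proof.
  symmetry. apply opp_unique.
  rewrite (addC x y), <- addA, (addA x (- x)), addNr, add0l, addNr.
  reflexivity.
Qed.
Lemma addACA a b c e : (a + b) + (c + e) = (a + c) + (b + e).
Proof. rewrite <- !addA. f_equal. rewrite !addA. f_equal. apply addC. Qed.
End RngFacts.

Section Additive.
Variables (R S : rng) (h : R -> S).
Hypotheses (HR : is_rng R) (HS : is_rng S).
Hypothesis h_add : forall x y, h (radd R x y) = radd S (h x) (h y).

Lemma additive_0 : h (rzero R) = rzero S.
Proof.
  apply (addIr S HS (h (rzero R))). rewrite <- h_add, !add0r by assumption.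
  reflexivity.
Qed.
Lemma additive_opp x : h (ropp R x) = ropp S (h x).
Proof.
  apply opp_unique; auto. rewrite <- h_add, addNr, additive_0 by assumption.
  reflexivity.
Qed.
End Additive.

Lemma surjective_mul_hom_one (R S : ring) (HR : is_ring R) (HS : is_ring S) (h : R -> S) :
  (forall x y, h (rmul R x y) = rmul S (h x) (h y)) -> (forall y, exists x, h x = y) ->
  h (rone R) = rone S.
Proof.
  intros h_mul h_surj. destruct (h_surj (rone S)) as (x&Hx).
  rewrite <- (proj1 (proj2 HS) (h (rone R))), <- Hx, <- h_mul.
  f_equal. apply HR.
Qed.

Lemma mul0l (R : rng) (HR : is_rng R) x : rmul R (rzero R) x = rzero R.
Proof. apply (additive_0 R R (fun y => rmul R y x)); auto. intros; apply mulDl, HR. Qed.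
Lemma mul0r (R : rng) (HR : is_rng R) x : rmul R x (rzero R) = rzero R.
Proof. apply (additive_0 R R (rmul R x)); auto. intros; apply mulDr, HR. Qed.
Lemma mulNl (R : rng) (HR : is_rng R) x y : rmul R (ropp R x) y = ropp R (rmul R x y).
Proof. apply (additive_opp R R (fun z => rmul R z y)); auto. intros; apply mulDl, HR. Qed.
Lemma mulNr (R : rng) (HR : is_rng R) x y : rmul R x (ropp R y) = ropp R (rmul R x y).
Proof. apply (additive_opp R R (rmul R x)); auto. intros; apply mulDr, HR. Qed.

(* An expression over atoms
   x_0, x_1, ... is sent to its list of integer coefficients, each integer
   being a pair (m, n) standing for m - n; two expressions with equivalent
   coefficient lists are equal in every abelian group. *)
Section AbelianNormalForm.
Variable R : rng.
Hypothesis HR : is_rng R.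
Local Notation "x + y" := (radd R x y).
Local Notation "- x" := (ropp R x).
Local Notation "0" := (rzero R).

Inductive gexpr := GAtom (n : nat) | GZero | GAdd (a b : gexpr) | GOpp (a : gexpr).

Fixpoint geval (env : list R) (e : gexpr) : R :=
  match e with
  | GAtom n => nth n env 0
  | GZero => 0
  | GAdd a b => geval env a + geval env b
  | GOpp a => - geval env a
  end.

Fixpoint natmul (n : nat) (x : R) : R := match n with O => 0 | S k => x + natmul k x end.
Definition intmul (c : nat * nat) (x : R) : R := natmul (fst c) x + - natmul (snd c) x.

Fixpoint nf_eval (env : list R) (l : list (nat * nat)) : R :=
  match l with [] => 0 | c :: l' => intmul c (hd 0 env) + nf_eval (tl env) l' end.

Lemma natmul_add m n x : natmul (m + n) x = natmul m x + natmul n x.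
Proof.
  induction m; simpl.
  - now rewrite add0l.
  - now rewrite IHm, addA.
Qed.

Lemma intmul_add a b c e x : intmul (a + c, b + e)%nat x = intmul (a, b) x + intmul (c, e) x.
Proof. unfold intmul; simpl. rewrite !natmul_add, oppD by exact HR. apply addACA, HR. Qed.

Lemma intmul_opp a b x : intmul (b, a) x = - intmul (a, b) x.
Proof. unfold intmul; simpl. rewrite oppD, oppK by exact HR. apply addC, HR. Qed.

Lemma intmul_eq a b c e x : (a + e = c + b)%nat -> intmul (a, b) x = intmul (c, e) x.
Proof.
  intro H. unfold intmul; simpl.
  assert (H2 : natmul a x + natmul e x = natmul c x + natmul b x)
    by (rewrite <- !natmul_add, H; reflexivity).
  apply eq_of_sub_eq0; auto. rewrite oppD, oppK by exact HR.
  rewrite (addC R HR (- natmul c x) (natmul e x)), addACA, H2,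
    (addC R HR (- natmul b x)), <- oppD by exact HR.
  apply addNr, HR.
Qed.

Fixpoint nf_add (l1 l2 : list (nat * nat)) : list (nat * nat) :=
  match l1, l2 with
  | [], l => l
  | l, [] => l
  | (a, b) :: r1, (c, e) :: r2 => (a + c, b + e)%nat :: nf_add r1 r2
  end.
Definition nf_opp (l : list (nat * nat)) := map (fun c => (snd c, fst c)) l.
Fixpoint nf_atom (n : nat) : list (nat * nat) :=
  match n with O => [(1, 0)%nat] | S k => (0, 0)%nat :: nf_atom k end.
Fixpoint nf (e : gexpr) : list (nat * nat) :=
  match e with
  | GAtom n => nf_atom n
  | GZero => []
  | GAdd a b => nf_add (nf a) (nf b)
  | GOpp a => nf_opp (nf a)
  end.

Lemma nf_eval_add env l1 l2 : nf_eval env (nf_add l1 l2) = nf_eval env l1 + nf_eval env l2.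
Proof.
  revert env l2; induction l1 as [|[a b] r IH]; intros env l2; simpl.
  - now rewrite add0l.
  - destruct l2 as [|[c e] r2]; simpl.
    + now rewrite add0r.
    + rewrite IH, intmul_add. apply addACA, HR.
Qed.

Lemma nf_eval_opp env l : nf_eval env (nf_opp l) = - nf_eval env l.
Proof.
  revert env; induction l as [|[a b] r IH]; intros env; simpl.
  - now rewrite opp0.
  - rewrite IH, intmul_opp, oppD by exact HR. reflexivity.
Qed.

Lemma nf_eval_atom env n : nf_eval env (nf_atom n) = nth n env 0.
Proof.
  revert env; induction n; intros env; simpl.
  - unfold intmul; simpl. rewrite add0r, opp0, !add0r by exact HR.
    destruct env; reflexivity.
  - rewrite IHn. unfold intmul; simpl. rewrite addNr, add0l by exact HR.
    destruct env; simpl; auto. destruct n; reflexivity.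
Qed.

Lemma nf_correct env e : geval env e = nf_eval env (nf e).
Proof.
  induction e; simpl.
  - now rewrite nf_eval_atom.
  - reflexivity.
  - now rewrite nf_eval_add, IHe1, IHe2.
  - now rewrite nf_eval_opp, IHe.
Qed.

Fixpoint nf_zerob (l : list (nat * nat)) : bool :=
  match l with [] => true | (a, b) :: r => Nat.eqb a b && nf_zerob r end.
Fixpoint nf_eqb (l1 l2 : list (nat * nat)) : bool :=
  match l1, l2 with
  | [], l => nf_zerob l
  | l, [] => nf_zerob l
  | (a, b) :: r1, (c, e) :: r2 => Nat.eqb (a + e) (c + b) && nf_eqb r1 r2
  end.

Lemma nf_zerob_sound env l : nf_zerob l = true -> nf_eval env l = 0.
Proof.
  revert env; induction l as [|[a b] r IH]; intros env H; simpl in *; [reflexivity|].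
  apply andb_prop in H; destruct H as [H1 H2]. apply Nat.eqb_eq in H1; subst b.
  rewrite IH by exact H2. unfold intmul; simpl. rewrite addNr, add0r by exact HR.
  reflexivity.
Qed.

Lemma nf_eqb_sound env l1 l2 : nf_eqb l1 l2 = true -> nf_eval env l1 = nf_eval env l2.
Proof.
  revert env l2; induction l1 as [|[a b] r IH]; intros env l2 H.
  - simpl in H. rewrite (nf_zerob_sound env l2 H). reflexivity.
  - destruct l2 as [|[c e] r2].
    + change (nf_zerob ((a, b) :: r) = true) in H. rewrite (nf_zerob_sound env _ H).
      reflexivity.
    + simpl in *. apply andb_prop in H; destruct H as [H1 H2]. apply Nat.eqb_eq in H1.
      rewrite (IH _ _ H2), (intmul_eq a b c e) by exact H1. reflexivity.
Qed.

Theorem abel_sound env e1 e2 : nf_eqb (nf e1) (nf e2) = true -> geval env e1 = geval env e2.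
Proof. intro H. rewrite !nf_correct. now apply nf_eqb_sound. Qed.
End AbelianNormalForm.

Ltac atom_index x env :=
  lazymatch env with
  | x :: _ => constr:(O)
  | _ :: ?r => let k := atom_index x r in constr:(S k)
  end.
Ltac snoc env t :=
  lazymatch env with
  | nil => constr:(cons t nil)
  | ?h :: ?r => let r' := snoc r t in constr:(h :: r')
  end.
Ltac atom_count env :=
  lazymatch env with nil => constr:(O) | _ :: ?r => let k := atom_count r in constr:(S k) end.
Ltac reify_group t env :=
  lazymatch t with
  | radd _ ?a ?b =>
      lazymatch reify_group a env with (?e1, ?env1) =>
      lazymatch reify_group b env1 with (?e2, ?env2) => constr:((GAdd e1 e2, env2)) end end
  | ropp _ ?a =>
      lazymatch reify_group a env with (?e1, ?env1) => constr:((GOpp e1, env1)) end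
  | rzero _ => constr:((GZero, env))
  | _ =>
      match constr:(tt) with
      | _ => let k := atom_index t env in constr:((GAtom k, env))
      | _ => let k := atom_count env in
             let env' := snoc env t in constr:((GAtom k, env'))
      end
  end.

(* [abel HR] proves an equation between terms of an rng R (HR : is_rng R)
   that holds in every abelian group, products and other terms being atoms. *)
Ltac abel HR :=
  lazymatch goal with
  | |- @eq (rcar ?R) ?l ?r =>
    lazymatch reify_group l (@nil (rcar R)) with (?e1, ?env1) =>
    lazymatch reify_group r env1 with (?e2, ?env2) =>
      refine (abel_sound R HR env2 e1 e2 _); vm_compute; reflexivity
    end end
  end.

Lemma subr_eq0_of_eq (R : rng) (HR : is_rng R) x y :
  x = y -> radd R x (ropp R y) = rzero R.
Proof. intros ->. apply addNr, HR. Qed.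
Lemma opp_subr_eq0_of_eq (R : rng) (HR : is_rng R) x y :
  x = y -> ropp R (radd R x (ropp R y)) = rzero R.
Proof. intros ->. rewrite addNr by exact HR. apply opp0, HR. Qed.

(* [abel_from H HR] proves l = r from H : L = R when l - r = +-(L - R) in
   every abelian group. *)
Ltac abel_from H HR :=
  lazymatch type of H with ?L = ?R =>
  apply (eq_of_sub_eq0 _ HR);
  first [ transitivity (radd _ L (ropp _ R));
          [abel HR | exact (subr_eq0_of_eq _ HR _ _ H)]
        | transitivity (ropp _ (radd _ L (ropp _ R)));
          [abel HR | exact (opp_subr_eq0_of_eq _ HR _ _ H)] ]
  end.

Lemma pair_eq {A C : Type} (a a' : A) (u u' : C) : a = a' -> u = u' -> (a, u) = (a', u').
Proof. intros -> ->; reflexivity. Qed.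

Section Classification.
Context {B : rng} {D : ring} {d : B -> D} {th : D -> bimul B} {Q : ring}.
Hypotheses (HB : is_rng B) (HD : is_ring D) (Hreg : regular_Esystem B D d th).
Hypothesis HQ : is_ring Q.
Let HDr : is_rng D := proj1 HD.
Let HQr : is_rng Q := proj1 HQ.

Lemma bl_add x a b : bl (th x) (radd B a b) = radd B (bl (th x) a) (bl (th x) b).
Proof. apply Hreg. Qed.
Lemma br_add x a b : br (th x) (radd B a b) = radd B (br (th x) a) (br (th x) b).
Proof. apply Hreg. Qed.
Lemma bl_mul x a b : bl (th x) (rmul B a b) = rmul B (bl (th x) a) b.
Proof. apply Hreg. Qed.
Lemma br_mul x a b : br (th x) (rmul B a b) = rmul B a (br (th x) b).
Proof. apply Hreg. Qed.
Lemma mul_bl x a b : rmul B a (bl (th x) b) = rmul B (br (th x) a) b.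
Proof. apply Hreg. Qed.
Lemma th_addl x y b : bl (th (radd D x y)) b = radd B (bl (th x) b) (bl (th y) b).
Proof. apply Hreg. Qed.
Lemma th_addr x y b : br (th (radd D x y)) b = radd B (br (th x) b) (br (th y) b).
Proof. apply Hreg. Qed.
Lemma th_mull x y b : bl (th (rmul D x y)) b = bl (th x) (bl (th y) b).
Proof. apply Hreg. Qed.
Lemma th_mulr x y b : br (th (rmul D x y)) b = br (th y) (br (th x) b).
Proof. apply Hreg. Qed.
Lemma th_dl b c : bl (th (d b)) c = rmul B b c.
Proof. apply Hreg. Qed.
Lemma th_dr b c : br (th (d b)) c = rmul B c b.
Proof. apply Hreg. Qed.
Lemma th_1l b : bl (th (rone D)) b = b.
Proof. apply Hreg. Qed.
Lemma th_1r b : br (th (rone D)) b = b.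
Proof. apply Hreg. Qed.
Lemma th_perm x y b : br (th y) (bl (th x) b) = bl (th x) (br (th y) b).
Proof. symmetry. apply Hreg. Qed.
Lemma d_add a b : d (radd B a b) = radd D (d a) (d b).
Proof. apply Hreg. Qed.
Lemma d_mul a b : d (rmul B a b) = rmul D (d a) (d b).
Proof. apply Hreg. Qed.
Lemma d_bl x b : d (bl (th x) b) = rmul D x (d b).
Proof. apply Hreg. Qed.
Lemma d_br x b : d (br (th x) b) = rmul D (d b) x.
Proof. apply Hreg. Qed.

Lemma bl_0 x : bl (th x) (rzero B) = rzero B.
Proof. exact (additive_0 B B _ HB HB (bl_add x)). Qed.
Lemma br_0 x : br (th x) (rzero B) = rzero B.
Proof. exact (additive_0 B B _ HB HB (br_add x)). Qed.
Lemma bl_opp x a : bl (th x) (ropp B a) = ropp B (bl (th x) a).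
Proof. exact (additive_opp B B _ HB HB (bl_add x) a). Qed.
Lemma br_opp x a : br (th x) (ropp B a) = ropp B (br (th x) a).
Proof. exact (additive_opp B B _ HB HB (br_add x) a). Qed.
Lemma th_0l b : bl (th (rzero D)) b = rzero B.
Proof. exact (additive_0 D B (fun x => bl (th x) b) HDr HB (fun x y => th_addl x y b)). Qed.
Lemma th_0r b : br (th (rzero D)) b = rzero B.
Proof. exact (additive_0 D B (fun x => br (th x) b) HDr HB (fun x y => th_addr x y b)). Qed.
Lemma th_oppl x b : bl (th (ropp D x)) b = ropp B (bl (th x) b).
Proof. exact (additive_opp D B (fun x => bl (th x) b) HDr HB (fun x y => th_addl x y b) x). Qed.
Lemma th_oppr x b : br (th (ropp D x)) b = ropp B (br (th x) b).
Proof. exact (additive_opp D B (fun x => br (th x) b) HDr HB (fun x y => th_addr x y b) x). Qed.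
Lemma d_0 : d (rzero B) = rzero D.
Proof. exact (additive_0 B D d HB HDr d_add). Qed.
Lemma d_opp a : d (ropp B a) = ropp D (d a).
Proof. exact (additive_opp B D d HB HDr d_add a). Qed.
Lemma D_mul1l x : rmul D (rone D) x = x.
Proof. apply HD. Qed.
Lemma D_mul1r x : rmul D x (rone D) = x.
Proof. apply HD. Qed.

Hint Rewrite bl_add br_add bl_mul br_mul mul_bl bl_0 br_0 bl_opp br_opp
  th_addl th_addr th_mull th_mulr th_dl th_dr th_0l th_0r th_oppl th_oppr
  th_1l th_1r th_perm
  (mulDr B HB) (mulDl B HB) (mulNr B HB) (mulNl B HB) (mul0r B HB) (mul0l B HB)
  (mulA B HB) (oppK B HB) (oppD B HB) (opp0 B HB) : expandB.
Hint Rewrite d_add d_mul d_0 d_opp d_bl d_br D_mul1l D_mul1r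
  (mulDr D HDr) (mulDl D HDr) (mulNr D HDr) (mulNl D HDr) (mul0r D HDr) (mul0l D HDr)
  (mulA D HDr) (oppK D HDr) (oppD D HDr) (opp0 D HDr) : expandD.

Ltac bsimpl := autorewrite with expandB; abel HB.
Ltac dsimpl := autorewrite with expandD; abel HDr.
Ltac bsolve_from H := autorewrite with expandB in H |- *; abel_from H HB.

Section AnnFunctorEquations.
Context {F : Q -> D} {f g : Q -> Q -> B}.
Hypothesis HF : ann_functor B D d th Q F f g.

Lemma F_add u v : F (radd Q u v) = radd D (radd D (F u) (F v)) (ropp D (d (f u v))).
Proof. destruct HF as (H&_). unfold A_mor in H. rewrite (H u v). abel HDr. Qed.
Lemma F_mul u v : F (rmul Q u v) = radd D (rmul D (F u) (F v)) (ropp D (d (g u v))).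
Proof. destruct HF as (_&H&_). unfold A_mor in H. rewrite (H u v). abel HDr. Qed.
Lemma f_assoc u v w :
  f (radd Q u v) w = radd B (radd B (f u (radd Q v w)) (f v w)) (ropp B (f u v)).
Proof.
  destruct HF as (_&_&H&_). specialize (H u v w). unfold A_comp, A_sum, A_id in H.
  bsolve_from H.
Qed.
Lemma f_comm u v : f v u = f u v.
Proof. apply HF. Qed.

Lemma f_0l_const : exists b0, F (rzero Q) = d b0 /\ forall u, f (rzero Q) u = b0.
Proof.
  destruct HF as (_&_&_&_&(b0&Hb0&H)&_). unfold A_mor in Hb0.
  unfold A_comp, A_sum, A_inv, A_id in H.
  exists b0. split.
  - rewrite Hb0. apply add0r, HDr.
  - intro u. destruct (H u) as (Hu&_). bsolve_from Hu.
Qed.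
Lemma f_0l u : f (rzero Q) u = f (rzero Q) (rzero Q).
Proof. destruct f_0l_const as (b0&_&H). rewrite !H. reflexivity. Qed.
Lemma F_0 : F (rzero Q) = d (f (rzero Q) (rzero Q)).
Proof. destruct f_0l_const as (b0&H0&H). rewrite H. exact H0. Qed.

Lemma g_assoc u v w :
  g (rmul Q u v) w = radd B (radd B (g u (rmul Q v w)) (bl (th (F u)) (g v w)))
                          (ropp B (br (th (F w)) (g u v))).
Proof.
  destruct HF as (_&_&_&_&_&H&_). specialize (H u v w). unfold A_comp, A_tensor, A_id in H.
  bsolve_from H.
Qed.

Lemma g_unit : exists c, F (rone Q) = radd D (d c) (rone D) /\
  (forall u, g (rone Q) u = br (th (F u)) c) /\ (forall u, g u (rone Q) = bl (th (F u)) c).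
Proof.
  destruct HF as (_&_&_&_&_&_&(c&Hc&H)&_). unfold A_mor in Hc.
  unfold A_comp, A_tensor, A_inv, A_id in H.
  exists c. split; [exact Hc|split]; intro u.
  - destruct (H u) as (Hu&_). bsolve_from Hu.
  - destruct (H u) as (_&Hu). bsolve_from Hu.
Qed.

Lemma g_distl u v w :
  g u (radd Q v w) = radd B (radd B (radd B (f (rmul Q u v) (rmul Q u w)) (g u v)) (g u w))
                          (ropp B (bl (th (F u)) (f v w))).
Proof.
  destruct HF as (_&_&_&_&_&_&_&H&_). specialize (H u v w).
  unfold A_comp, A_tensor, A_sum, A_id in H. bsolve_from H.
Qed.
Lemma g_distr u v w :
  g (radd Q u v) w = radd B (radd B (radd B (f (rmul Q u w) (rmul Q v w)) (g u w)) (g v w))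
                          (ropp B (br (th (F w)) (f u v))).
Proof.
  destruct HF as (_&_&_&_&_&_&_&_&H). specialize (H u v w).
  unfold A_comp, A_tensor, A_sum, A_id in H. bsolve_from H.
Qed.

(* distributivity at 0 + 0 = 0 determines g(u,0) and g(0,u) *)
Lemma g_0r u : g u (rzero Q) = radd B (bl (th (F u)) (f (rzero Q) (rzero Q)))
                                      (ropp B (f (rzero Q) (rzero Q))).
Proof.
  pose proof (g_distl u (rzero Q) (rzero Q)) as H.
  rewrite (add0l Q HQr), (mul0r Q HQr) in H. abel_from H HB.
Qed.
Lemma g_0l u : g (rzero Q) u = radd B (br (th (F u)) (f (rzero Q) (rzero Q)))
                                      (ropp B (f (rzero Q) (rzero Q))).
Proof.
  pose proof (g_distr (rzero Q) (rzero Q) u) as H.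
  rewrite (add0l Q HQr), (mul0l Q HQr) in H. abel_from H HB.
Qed.
End AnnFunctorEquations.

Section CrossedProduct.
Context {F : Q -> D} {f g : Q -> Q -> B}.
Hypothesis HF : ann_functor B D d th Q F f g.

Local Notation E := (EF B D th Q F f g).
Local Notation eadd := (EF_add B D th Q F f g).
Local Notation emul := (EF_mul B D th Q F f g).
Local Notation b00 := (f (rzero Q) (rzero Q)).

Lemma EF_addA x y z : eadd x (eadd y z) = eadd (eadd x y) z.
Proof.
  destruct x as [b u], y as [b' u'], z as [b'' u'']. cbn. apply pair_eq.
  - rewrite (f_assoc HF u u' u''). abel HB.
  - apply addA, HQr.
Qed.
Lemma EF_addC x y : eadd x y = eadd y x.
Proof.
  destruct x as [b u], y as [b' u']. cbn. apply pair_eq.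
  - rewrite (f_comm HF u u'). abel HB.
  - apply addC, HQr.
Qed.

Lemma EF_zero_left x : eadd (ropp B b00, rzero Q) x = x.
Proof.
  destruct x as [b u]. cbn. apply pair_eq.
  - rewrite (f_0l HF u). abel HB.
  - apply add0l, HQr.
Qed.
Lemma EF_zero_spec x : eadd (EF_zero B D th Q F f g) x = x.
Proof. unfold EF_zero. revert x. apply epsilon_spec. eexists. apply EF_zero_left. Qed.
Lemma EF_zero_eq : EF_zero B D th Q F f g = (ropp B b00, rzero Q).
Proof.
  rewrite <- (EF_zero_left (EF_zero B D th Q F f g)) at 1.
  rewrite EF_addC. apply EF_zero_spec.
Qed.
Lemma EF_opp_spec x : eadd (EF_opp B D th Q F f g x) x = EF_zero B D th Q F f g.
Proof.
  unfold EF_opp. apply epsilon_spec. rewrite EF_zero_eq. destruct x as [b u].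
  exists (radd B (radd B (ropp B b00) (ropp B b)) (ropp B (f (ropp Q u) u)), ropp Q u).
  cbn. apply pair_eq.
  - abel HB.
  - apply addNl, HQr.
Qed.

Lemma EF_mulA x y z : emul x (emul y z) = emul (emul x y) z.
Proof.
  destruct x as [b u], y as [b' u'], z as [b'' u'']. cbn. apply pair_eq.
  - rewrite (F_mul HF u u'), (F_mul HF u' u''), (g_assoc HF u u' u''). bsimpl.
  - apply mulA, HQr.
Qed.
Lemma EF_mulDl x y z : emul x (eadd y z) = eadd (emul x y) (emul x z).
Proof.
  destruct x as [b u], y as [b' u'], z as [b'' u'']. cbn. apply pair_eq.
  - rewrite (F_add HF u' u''), (g_distl HF u u' u''). bsimpl.
  - apply mulDr, HQr.
Qed.
Lemma EF_mulDr x y z : emul (eadd x y) z = eadd (emul x z) (emul y z).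
Proof.
  destruct x as [b u], y as [b' u'], z as [b'' u'']. cbn. apply pair_eq.
  - rewrite (F_add HF u u'), (g_distr HF u u' u''). bsimpl.
  - apply mulDl, HQr.
Qed.

Lemma EF_unit_pair c : F (rone Q) = radd D (d c) (rone D) ->
  (forall u, g (rone Q) u = br (th (F u)) c) -> (forall u, g u (rone Q) = bl (th (F u)) c) ->
  forall x, emul (ropp B c, rone Q) x = x /\ emul x (ropp B c, rone Q) = x.
Proof.
  intros H1 Hl Hr [b u]. split; cbn; apply pair_eq.
  - rewrite H1, Hl. bsimpl.
  - apply HQ.
  - rewrite H1, Hr. bsimpl.
  - apply HQ.
Qed.
Lemma EF_one_spec x : emul (EF_one B D th Q F f g) x = x /\ emul x (EF_one B D th Q F f g) = x.
Proof.
  unfold EF_one. revert x. apply epsilon_spec.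
  destruct (g_unit HF) as (c&H1&Hl&Hr). eexists. exact (EF_unit_pair c H1 Hl Hr).
Qed.
Lemma EF_one_eq : exists c, F (rone Q) = radd D (d c) (rone D) /\
  EF_one B D th Q F f g = (ropp B c, rone Q).
Proof.
  destruct (g_unit HF) as (c&H1&Hl&Hr). exists c. split; [exact H1|].
  rewrite <- (proj2 (EF_unit_pair c H1 Hl Hr (EF_one B D th Q F f g))).
  apply EF_one_spec.
Qed.

Theorem EF_is_ring : is_ring E.
Proof.
  split; [|split; intro x; apply EF_one_spec].
  exact (conj EF_addA (conj EF_addC (conj EF_zero_spec (conj EF_opp_spec
    (conj EF_mulA (conj EF_mulDl EF_mulDr)))))).
Qed.

Local Notation j := (EF_j B D th Q F f g).
Local Notation p := (EF_p B D th Q F f g).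
Local Notation eps := (EF_eps B D d th Q F f g).

(* j b = (b - f(0,0), 0) is multiplicative because g(0,0) is determined
   by f(0,0) (lemma g_0l) *)
Lemma EF_j_hom : rng_hom B E j.
Proof.
  split; intros a b; cbn; apply pair_eq.
  - abel HB.
  - symmetry; apply add0l, HQr.
  - rewrite (g_0l HF), (F_0 HF). bsimpl.
  - symmetry; apply mul0l, HQr.
Qed.

Lemma EF_p_hom : ring_hom E Q p.
Proof.
  split; [split; intros [] []; reflexivity|].
  change (p (EF_one B D th Q F f g) = rone Q).
  destruct EF_one_eq as (c&_&->). reflexivity.
Qed.

Lemma EF_eps_hom : ring_hom E D eps.
Proof.
  split; [split|].
  - intros [b u] [b' u']. unfold EF_eps. cbn. rewrite (F_add HF u u'). dsimpl.
  - intros [b u] [b' u']. unfold EF_eps. cbn. rewrite (F_mul HF u u'). dsimpl.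
  - change (eps (EF_one B D th Q F f g) = rone D).
    destruct EF_one_eq as (c&Hc&->). unfold EF_eps. cbn. rewrite Hc. dsimpl.
Qed.

Definition EF_bimul (x : rcar B * rcar Q) : bimul B :=
  Bimul (fun c => radd B (rmul B (fst x) c) (bl (th (F (snd x))) c))
        (fun c => radd B (rmul B c (fst x)) (br (th (F (snd x))) c)).

Lemma EF_bimul_spec e b : j (bl (EF_bimul e) b) = emul e (j b) /\ j (br (EF_bimul e) b) = emul (j b) e.
Proof.
  destruct e as [b1 u]. split; cbn; apply pair_eq.
  - rewrite (g_0r HF), (F_0 HF). bsimpl.
  - symmetry; apply mul0r, HQr.
  - rewrite (g_0l HF), (F_0 HF). bsimpl.
  - symmetry; apply mul0l, HQr.
Qed.

Theorem EF_is_extension : is_extension B D d th Q E j p eps.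
Proof.
  split; [exact EF_is_ring|]. split; [exact EF_j_hom|]. split; [exact EF_p_hom|].
  split; [|split; [|split; [|split; [exact EF_eps_hom|]]]].
  - intros a b H. injection H as H. apply (addIr B HB (ropp B b00)).
    rewrite !(addC B HB (ropp B b00)). exact H.
  - intro u. exists (rzero B, u). reflexivity.
  - intros [b u]; split.
    + cbn. intros ->. exists (radd B b b00). cbn. apply pair_eq; [abel HB|reflexivity].
    + intros (b'&->). reflexivity.
  - exists EF_bimul. split; [exact EF_bimul_spec|split].
    + split; [exact EF_j_hom|split; [split|split]].
      * intros [b1 u] a b. cbn. repeat split; bsimpl.
      * intros [b1 u] [b1' u'] b. cbn. rewrite (F_add HF u u'), (F_mul HF u u').
        repeat split; bsimpl.
      * intros b c; cbn. rewrite (F_0 HF). split; bsimpl.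
      * intros x b. apply EF_bimul_spec.
    + split; [split; reflexivity|split; [exact EF_eps_hom|split]].
      * intro b. unfold EF_eps. cbn. rewrite (F_0 HF). dsimpl.
      * intros [b1 u] b. unfold EF_eps. cbn. split; bsimpl.
Qed.
End CrossedProduct.

Section Homotopy.
Context {F : Q -> D} {f g : Q -> Q -> B} {F' : Q -> D} {f' g' : Q -> Q -> B}.
Hypotheses (HF : ann_functor B D d th Q F f g) (HF' : ann_functor B D d th Q F' f' g').

Local Notation E := (EF B D th Q F f g).
Local Notation E' := (EF B D th Q F' f' g').
Local Notation eadd := (EF_add B D th Q F f g).
Local Notation eadd' := (EF_add B D th Q F' f' g').
Local Notation emul := (EF_mul B D th Q F f g).
Local Notation emul' := (EF_mul B D th Q F' f' g').

(* a homotopy a : F => F' induces the ring isomorphism (b, u) |-> (b - a u, u) *)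
Theorem homotopic_equiv : ann_homotopic B D d th Q F f g F' f' g' ->
  ext_equiv B D Q E (EF_j B D th Q F f g) (EF_p B D th Q F f g) (EF_eps B D d th Q F f g)
                  E' (EF_j B D th Q F' f' g') (EF_p B D th Q F' f' g') (EF_eps B D d th Q F' f' g').
Proof.
  intros (a&Ha_mor&Ha_add&Ha_mul). unfold A_mor in Ha_mor.
  unfold A_comp, A_sum, A_tensor in Ha_add, Ha_mul.
  set (eta := fun x : rcar B * rcar Q => (radd B (fst x) (ropp B (a (snd x))), snd x)).
  assert (eta_add : forall x y, eta (eadd x y) = eadd' (eta x) (eta y)).
  { intros [b u] [b' u']. unfold eta; cbn. apply pair_eq; [|reflexivity].
    specialize (Ha_add u u'). abel_from Ha_add HB. }
  assert (eta_mul : forall x y, eta (emul x y) = emul' (eta x) (eta y)).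
  { intros [b u] [b' u']. unfold eta; cbn. apply pair_eq; [|reflexivity].
    specialize (Ha_mul u u'). rewrite (Ha_mor u), (Ha_mor u'). bsolve_from Ha_mul. }
  assert (eta_surj : forall y, exists x, eta x = y).
  { intros [b u]. exists (radd B b (a u), u). unfold eta; cbn.
    apply pair_eq; [abel HB|reflexivity]. }
  exists eta. split; [split; [split; [exact eta_add|exact eta_mul]|]|split; [|split]].
  - exact (surjective_mul_hom_one E E' (EF_is_ring HF) (EF_is_ring HF') eta eta_mul eta_surj).
  - intro b. unfold eta; cbn. apply pair_eq; [|reflexivity].
    specialize (Ha_add (rzero Q) (rzero Q)). rewrite (add0l Q HQr) in Ha_add.
    abel_from Ha_add HB.
  - intros [b u]; reflexivity.
  - intros [b u]. unfold EF_eps. cbn. rewrite (Ha_mor u). dsimpl.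
Qed.

(* an equivalence eta : E_F -> E_F' has the form (b, u) |-> (b + c u, u) and
   -c is a homotopy F => F' *)
Theorem equiv_homotopic :
  ext_equiv B D Q E (EF_j B D th Q F f g) (EF_p B D th Q F f g) (EF_eps B D d th Q F f g)
                  E' (EF_j B D th Q F' f' g') (EF_p B D th Q F' f' g') (EF_eps B D d th Q F' f' g') ->
  ann_homotopic B D d th Q F f g F' f' g'.
Proof.
  intros (eta&((eta_add&eta_mul)&_)&eta_j&eta_p&eta_eps). simpl in eta_add, eta_mul.
  set (c := fun u => fst (eta (rzero B, u))).
  assert (eta_0u : forall u, eta (rzero B, u) = (c u, u)).
  { intro u. rewrite (surjective_pairing (eta (rzero B, u))). apply pair_eq; [reflexivity|].
    exact (eta_p (rzero B, u)). }
  assert (eta_bu : forall b u, eta (b, u) = (radd B b (c u), u)).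
  { intros b u. transitivity (eta (eadd (EF_j B D th Q F f g b) (rzero B, u))).
    - f_equal. cbn. apply pair_eq.
      + rewrite (f_0l HF u). abel HB.
      + symmetry; apply add0l, HQr.
    - rewrite eta_add, eta_j, eta_0u. cbn. apply pair_eq.
      + rewrite (f_0l HF' u). abel HB.
      + apply add0l, HQr. }
  assert (F'_eq : forall u, F' u = radd D (d (ropp B (c u))) (F u)).
  { intro u. pose proof (eta_eps (rzero B, u)) as H. rewrite eta_0u in H.
    unfold EF_eps in H. cbn in H. autorewrite with expandD in H |- *. abel_from H HDr. }
  exists (fun u => ropp B (c u)). split; [exact F'_eq|split]; intros u v.
  - unfold A_comp, A_sum.
    pose proof (eta_add (rzero B, u) (rzero B, v)) as H. rewrite !eta_0u in H. cbn in H.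
    rewrite eta_bu in H. apply (f_equal fst) in H. cbn in H. abel_from H HB.
  - unfold A_comp, A_tensor.
    assert (Huv : emul (rzero B, u) (rzero B, v) = (g u v, rmul Q u v)).
    { cbn. apply pair_eq; [bsimpl|reflexivity]. }
    pose proof (eta_mul (rzero B, u) (rzero B, v)) as H. rewrite Huv, eta_bu, !eta_0u in H.
    cbn in H. apply (f_equal fst) in H. cbn in H. rewrite (F'_eq u), (F'_eq v) in H.
    bsolve_from H.
Qed.
End Homotopy.

(* Every extension of type B -> D is equivalent to a crossed product: pick a
   set-theoretic section s of p; then F u = eps (s u) is an Ann-functor
   whose structure maps are the defects of s on sums and products. *)
Section ExtensionToFunctor.
Context {E : ring} {j : B -> E} {p : E -> Q} {eps : E -> D}.
Hypothesis HE : is_extension B D d th Q E j p eps.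
Let HEr : is_rng E := proj1 (proj1 HE).

Let s (u : Q) : E := epsilon (inhabits (rone E)) (fun e => p e = u).
Let jinv (e : E) : B := epsilon (inhabits (rzero B)) (fun b => j b = e).

Lemma s_spec u : p (s u) = u.
Proof. unfold s. apply epsilon_spec. apply HE. Qed.

Lemma j_add a b : j (radd B a b) = radd E (j a) (j b).
Proof. apply HE. Qed.
Lemma j_mul a b : j (rmul B a b) = rmul E (j a) (j b).
Proof. apply HE. Qed.
Lemma j_opp a : j (ropp B a) = ropp E (j a).
Proof. exact (additive_opp B E j HB HEr j_add a). Qed.
Lemma j_0 : j (rzero B) = rzero E.
Proof. exact (additive_0 B E j HB HEr j_add). Qed.
Lemma j_inj a b : j a = j b -> a = b.
Proof. apply HE. Qed.
Lemma p_add a b : p (radd E a b) = radd Q (p a) (p b).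
Proof. apply HE. Qed.
Lemma p_mul a b : p (rmul E a b) = rmul Q (p a) (p b).
Proof. apply HE. Qed.
Lemma p_opp a : p (ropp E a) = ropp Q (p a).
Proof. exact (additive_opp E Q p HEr HQr p_add a). Qed.
Lemma p_1 : p (rone E) = rone Q.
Proof. apply HE. Qed.
Lemma p_j b : p (j b) = rzero Q.
Proof. apply HE. eauto. Qed.
Lemma eps_add a b : eps (radd E a b) = radd D (eps a) (eps b).
Proof. apply HE. Qed.
Lemma eps_mul a b : eps (rmul E a b) = rmul D (eps a) (eps b).
Proof. apply HE. Qed.
Lemma eps_opp a : eps (ropp E a) = ropp D (eps a).
Proof. exact (additive_opp E D eps HEr HDr eps_add a). Qed.
Lemma eps_1 : eps (rone E) = rone D.
Proof. apply HE. Qed.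
Lemma eps_j b : eps (j b) = d b.
Proof. pose proof HE as HE'. destruct HE' as (_&_&_&_&_&_&_&th'&_&_&(_&_&H&_)). apply H. Qed.
Lemma j_bl e b : j (bl (th (eps e)) b) = rmul E e (j b).
Proof.
  pose proof HE as HE'. destruct HE' as (_&_&_&_&_&_&_&th'&Hth'&_&(_&_&_&H)). rewrite <- (proj1 (H e b)).
  apply Hth'.
Qed.
Lemma j_br e b : j (br (th (eps e)) b) = rmul E (j b) e.
Proof.
  pose proof HE as HE'. destruct HE' as (_&_&_&_&_&_&_&th'&Hth'&_&(_&_&_&H)). rewrite <- (proj2 (H e b)).
  apply Hth'.
Qed.
Lemma j_jinv e : p e = rzero Q -> j (jinv e) = e.
Proof.
  intro H. unfold jinv. apply epsilon_spec. apply HE in H. destruct H as (b&->). eauto.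
Qed.

Let ext_F (u : Q) : D := eps (s u).
Let ext_f (u v : Q) : B := jinv (radd E (radd E (s u) (s v)) (ropp E (s (radd Q u v)))).
Let ext_g (u v : Q) : B := jinv (radd E (rmul E (s u) (s v)) (ropp E (s (rmul Q u v)))).

Lemma j_ext_f u v : j (ext_f u v) = radd E (radd E (s u) (s v)) (ropp E (s (radd Q u v))).
Proof. apply j_jinv. rewrite p_add, p_opp, p_add, !s_spec. apply addNr, HQr. Qed.
Lemma j_ext_g u v : j (ext_g u v) = radd E (rmul E (s u) (s v)) (ropp E (s (rmul Q u v))).
Proof. apply j_jinv. rewrite p_add, p_opp, p_mul, !s_spec. apply addNr, HQr. Qed.
Lemma j_unit_defect : j (jinv (radd E (s (rone Q)) (ropp E (rone E)))) =
  radd E (s (rone Q)) (ropp E (rone E)).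
Proof. apply j_jinv. rewrite p_add, p_opp, s_spec, p_1. apply addNr, HQr. Qed.

Lemma E_mul1l x : rmul E (rone E) x = x.
Proof. apply HE. Qed.
Lemma E_mul1r x : rmul E x (rone E) = x.
Proof. apply HE. Qed.

Hint Rewrite j_add j_mul j_opp j_0 j_ext_f j_ext_g j_unit_defect j_bl j_br : expandJ.
Hint Rewrite (mulDr E HEr) (mulDl E HEr) (mulNr E HEr) (mulNl E HEr) (mul0r E HEr)
  (mul0l E HEr) (mulA E HEr) (oppK E HEr) (oppD E HEr) (opp0 E HEr) E_mul1l E_mul1r : expandE.
Ltac esimpl := autorewrite with expandJ expandE; abel HEr.
(* to prove an identity of B, prove its image under j *)
Ltac via_j := apply j_inj; unfold ext_F; autorewrite with expandJ expandE.

(* s(0 + 0) = s(0): the (+)-unit constraint of ext_F is ext_f(0, 0) *)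
Lemma s_00 : s (radd Q (rzero Q) (rzero Q)) = s (rzero Q).
Proof. rewrite (add0l Q HQr). reflexivity. Qed.

(* each coherence of (ext_F, ext_f, ext_g) becomes, after applying j, an
   identity of E following from associativity, commutativity, units and
   distributivity in Q *)
Theorem ext_functor : ann_functor B D d th Q ext_F ext_f ext_g.
Proof.
  unfold ann_functor, A_mor, A_comp, A_sum, A_id, A_inv, A_tensor.
  split; [|split; [|split; [|split; [|split; [|split; [|split; [|split]]]]]]].
  - intros u v. unfold ext_F. rewrite <- eps_j, j_ext_f, !eps_add, !eps_opp. abel HDr.
  - intros u v. unfold ext_F. rewrite <- eps_j, j_ext_g, !eps_add, !eps_opp, eps_mul. abel HDr.
  - intros u v w. via_j. rewrite (addA Q HQr u v w). abel HEr.
  - intros u v. via_j. rewrite (addC Q HQr v u). abel HEr.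
  - exists (ext_f (rzero Q) (rzero Q)). split.
    + unfold ext_F. rewrite <- eps_j, j_ext_f, s_00, !eps_add, !eps_opp. abel HDr.
    + intro u. split; via_j.
      * rewrite (add0l Q HQr u), s_00. abel HEr.
      * rewrite (add0r Q HQr u), s_00. abel HEr.
  - intros u v w. via_j. rewrite (mulA Q HQr u v w). abel HEr.
  - exists (jinv (radd E (s (rone Q)) (ropp E (rone E)))). split.
    + unfold ext_F. rewrite <- eps_j, j_unit_defect, eps_add, eps_opp, eps_1. abel HDr.
    + intro u. split; via_j.
      * rewrite (proj1 (proj2 HQ) u). abel HEr.
      * rewrite (proj2 (proj2 HQ) u). abel HEr.
  - intros u v w. via_j. rewrite (mulDr Q HQr u v w). abel HEr.
  - intros u v w. via_j. rewrite (mulDl Q HQr u v w). abel HEr.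
Qed.

(* (b, u) |-> j b + s u is an equivalence E_F -> E *)
Theorem ext_crossed_product_equiv :
  ext_equiv B D Q (EF B D th Q ext_F ext_f ext_g) (EF_j B D th Q ext_F ext_f ext_g)
    (EF_p B D th Q ext_F ext_f ext_g) (EF_eps B D d th Q ext_F ext_f ext_g) E j p eps.
Proof.
  set (eta := fun x : rcar B * rcar Q => radd E (j (fst x)) (s (snd x))).
  assert (eta_mul : forall x y, eta (EF_mul B D th Q ext_F ext_f ext_g x y) = rmul E (eta x) (eta y)).
  { intros [b u] [b' u']. unfold eta, ext_F; cbn. esimpl. }
  assert (eta_surj : forall e, exists x, eta x = e).
  { intro e. exists (jinv (radd E e (ropp E (s (p e)))), p e). unfold eta; cbn.
    rewrite j_jinv; [abel HEr|]. rewrite p_add, p_opp, s_spec. apply addNr, HQr. }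
  exists eta. split; [split; [split|]|split; [|split]].
  - intros [b u] [b' u']. unfold eta; cbn. esimpl.
  - exact eta_mul.
  - exact (surjective_mul_hom_one _ E (EF_is_ring ext_functor) (proj1 HE) eta eta_mul eta_surj).
  - intro b. unfold eta; cbn. autorewrite with expandJ expandE. rewrite s_00. abel HEr.
  - intros [b u]. unfold eta; cbn. rewrite p_add, p_j, s_spec. apply add0l, HQr.
  - intros [b u]. unfold eta, EF_eps, ext_F; cbn. rewrite eps_add, eps_j. reflexivity.
Qed.

Theorem extension_is_crossed_product : exists F f g,
  ann_functor B D d th Q F f g /\ (forall u, exists e, p e = u /\ F u = eps e) /\
  ext_equiv B D Q (EF B D th Q F f g) (EF_j B D th Q F f g) (EF_p B D th Q F f g)
    (EF_eps B D d th Q F f g) E j p eps.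
Proof.
  exists ext_F, ext_f, ext_g. split; [exact ext_functor|split].
  - intro u. exists (s u). split; [apply s_spec|reflexivity].
  - exact ext_crossed_product_equiv.
Qed.
End ExtensionToFunctor.

End Classification.

(* The class of eps(b, u) = d b + F u in Coker d is that of F u. *)
Lemma EF_induces_psi (B : rng) (D : ring) (d : B -> D) (th : D -> bimul B) (Q C : ring)
  (q : D -> C) (psi : Q -> C) (F : Q -> D) (f g : Q -> Q -> B) :
  is_rng C -> is_coker B D d C q -> induces_psi Q D C q psi F ->
  ext_induces_psi Q D C q psi (EF B D th Q F f g) (EF_p B D th Q F f g) (EF_eps B D d th Q F f g).
Proof.
  intros HC (((q_add&_)&_)&_&q_ker) HFpsi [b u]. unfold EF_p, EF_eps. cbn.
  rewrite q_add, (proj2 (q_ker (d b)) (ex_intro _ b eq_refl)), HFpsi.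
  symmetry. apply add0l, HC.
Qed.

Theorem mainTheorem8
  (B : rng) (D : ring) (d : B -> D) (th : D -> bimul B)
  (HB : is_rng B) (HD : is_ring D) (Hreg : regular_Esystem B D d th)
  (Q : ring) (HQ : is_ring Q)
  (C : ring) (q : D -> C) (HC : is_ring C) (Hcoker : is_coker B D d C q)
  (psi : Q -> C) (Hpsi : ring_hom Q C psi) :
  (* Omega is well defined: E_F is an extension of type B -> D inducing psi *)
  (forall F f g,
     ann_functor B D d th Q F f g -> induces_psi Q D C q psi F ->
     is_extension B D d th Q (EF B D th Q F f g) (EF_j B D th Q F f g) (EF_p B D th Q F f g) (EF_eps B D d th Q F f g) /\
     ext_induces_psi Q D C q psi (EF B D th Q F f g) (EF_p B D th Q F f g) (EF_eps B D d th Q F f g)) /\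
  (* Omega is constant on homotopy classes *)
  (forall F f g F' f' g',
     ann_functor B D d th Q F f g -> induces_psi Q D C q psi F ->
     ann_functor B D d th Q F' f' g' -> induces_psi Q D C q psi F' ->
     ann_homotopic B D d th Q F f g F' f' g' ->
     ext_equiv B D Q
       (EF B D th Q F f g) (EF_j B D th Q F f g) (EF_p B D th Q F f g) (EF_eps B D d th Q F f g)
       (EF B D th Q F' f' g') (EF_j B D th Q F' f' g') (EF_p B D th Q F' f' g') (EF_eps B D d th Q F' f' g')) /\
  (* Omega is injective on homotopy classes *)
  (forall F f g F' f' g',
     ann_functor B D d th Q F f g -> induces_psi Q D C q psi F ->
     ann_functor B D d th Q F' f' g' -> induces_psi Q D C q psi F' ->
     ext_equiv B D Q
       (EF B D th Q F f g) (EF_j B D th Q F f g) (EF_p B D th Q F f g) (EF_eps B D d th Q F f g)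
       (EF B D th Q F' f' g') (EF_j B D th Q F' f' g') (EF_p B D th Q F' f' g') (EF_eps B D d th Q F' f' g') ->
     ann_homotopic B D d th Q F f g F' f' g') /\
  (* Omega is surjective onto Ext_{B->D}(Q, B, psi) *)
  (forall (E : ring) (j : B -> E) (p : E -> Q) (eps : E -> D),
     is_extension B D d th Q E j p eps -> ext_induces_psi Q D C q psi E p eps ->
     exists F f g,
       ann_functor B D d th Q F f g /\ induces_psi Q D C q psi F /\
       ext_equiv B D Q
         (EF B D th Q F f g) (EF_j B D th Q F f g) (EF_p B D th Q F f g) (EF_eps B D d th Q F f g)
         E j p eps).
Proof.
  split; [|split; [|split]].
  - intros F f g HF HFpsi. split.
    + exact (EF_is_extension HB HD Hreg HQ HF).
    + exact (EF_induces_psi B D d th Q C q psi F f g (proj1 HC) Hcoker HFpsi).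
  - intros F f g F' f' g' HF _ HF' _. exact (homotopic_equiv HB HD Hreg HQ HF HF').
  - intros F f g F' f' g' HF _ HF' _. exact (equiv_homotopic HB HD Hreg HQ HF HF').
  - intros E j p eps HE HEpsi.
    destruct (extension_is_crossed_product HB HD Hreg HQ HE) as (F&f&g&HF&HFeps&Hequiv).
    exists F, f, g. split; [exact HF|split; [|exact Hequiv]].
    intro u. destruct (HFeps u) as (e&<-&->). symmetry. apply HEpsi.
Qed.
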